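(* Let $K_1\subset\mathbb{R}^n$, $K_2\subset\wedge^2\mathbb{R}^n,\ldots,K_n\subset\wedge^n\mathbb{R}^n$ be proper cones. Then for every $j=2,\ldots,n$, $$\widetilde{T}(K_1,\ldots,K_j)\subseteq\operatorname{int}(T(K_1,\ldots,K_j)).$$
   Context: A proper cone is a closed convex cone that is pointed and solid; $\wedge^j\mathbb{R}^n$ is the $j$th exterior power of $\mathbb{R}^n$. Define recursively $T(K_1)=K_1\cup(-K_1)$, and for $j\ge2$, $T(K_1,\ldots,K_j)$ is the closure of the set of all $x_1\in\mathbb{R}^n$ for which there exist $x_2\in T(K_1),\ldots,x_j\in T(K_1,\ldots,K_{j-1})$ with $x_1\wedge\cdots\wedge x_j\in\operatorname{int}(K_j)\cup\operatorname{int}(-K_j)$. Similarly $\widetilde{T}(K_1)=\operatorname{int}(K_1)\cup(-\operatorname{int}(K_1))$, and for $j\ge2$, $\widetilde{T}(K_1,\ldots,K_j)$ is the set (no closure) of all $x_1\in\mathbb{R}^n$ for which there exist $x_2\in\widetilde{T}(K_1),\ldots,x_j\in\widetilde{T}(K_1,\ldots,K_{j-1})$ with $x_1\wedge\cdots\wedge x_j\in\operatorname{int}(K_j)\cup\operatorname{int}(-K_j)$. *)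

From HB Require Import structures.
From mathcomp Require Import all_boot all_order all_algebra.
From mathcomp Require Import all_classical all_reals all_analysis.
Set Implicit Arguments. Unset Strict Implicit. Unset Printing Implicit Defensive.
Import Order.TTheory GRing.Theory Num.Theory.
Import numFieldNormedType.Exports.
Local Open Scope classical_set_scope.
Local Open Scope ring_scope.

Definition convex_cone {R : realType} {V : normedModType R} (K : set V) : Prop :=
  K 0 /\ (forall x y, K x -> K y -> K (x + y)) /\
  (forall (a : R) x, 0 <= a -> K x -> K (a *: x)).

Definition proper_cone {R : realType} {V : normedModType R} (K : set V) : Prop :=
  [/\ closed K, convex_cone K,
      (forall x, K x -> K (- x) -> x = 0)
    & interior K !=set0 ].

Definition negset {R : realType} {V : normedModType R} (K : set V) : set V :=
  [set - y | y in K].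

(* The j-element subsets of {0,..,n-1}: they index the standard (Plücker)
   basis e_S = e_{s_1} ∧ ... ∧ e_{s_j} (s_1 < ... < s_j) of ∧^j R^n. *)
Definition ksub (n j : nat) : {set {set 'I_n}} := [set S : {set 'I_n} | #|S| == j].

(* ∧^j R^n, identified with R^{C(n,j)} via the basis e_S, S ∈ ksub n j. *)
Definition wedge_space (R : realType) (n j : nat) := 'rV[R]_(#|ksub n j|).

(* The j x j minor of the j x n matrix with rows v_0..v_{j-1}, on the columns
   of S listed increasingly. *)
Definition minor_on {R : realType} {n j : nat} (v : 'I_j -> 'rV[R]_n)
    (S : {set 'I_n}) : 'M[R]_j :=
  \matrix_(a < j, b < j)
     oapp (fun c : 'I_n => v a 0 c) 0
          (insub (nth 0%N [seq val c | c <- enum S] b) : option 'I_n).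

(* x_1 ∧ ... ∧ x_j in coordinates: the coefficient of e_S is the minor on S. *)
Definition wedge {R : realType} {n j : nat} (v : 'I_j -> 'rV[R]_n) :
    wedge_space R n j :=
  \row_(k < #|ksub n j|) \det (minor_on v (enum_val k)).

(* One step of the recursive definition: given the family P with
   P i = T(K_1,...,K_i) for 1 <= i < j, the set of x_1 such that there exist
   x_2 ∈ P 1, ..., x_j ∈ P (j-1) with x_1∧...∧x_j ∈ int(K_j) ∪ int(-K_j).
   (0-indexed: v 0 = x_1 and v i = x_{i+1} ∈ P i.) *)
Definition Tstep {R : realType} {n : nat} (P : nat -> set 'rV[R]_n)
    (Kj : forall j, set (wedge_space R n j)) (j : nat) : set 'rV[R]_n :=
  [set x | exists v : 'I_j -> 'rV[R]_n,
     [/\ forall i : 'I_j, val i = 0%N -> v i = x,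
         forall i : 'I_j, (0 < val i)%N -> P (val i) (v i)
       & (interior (Kj j) `|` interior (negset (Kj j))) (wedge v)]].

(* Tgen base post K m i = T(K_1,...,K_i) for 1 <= i <= m, where the base case
   (i = 1) is [base] and [post] is applied at each step j >= 2
   (closure for T, identity for T~). *)
Fixpoint Tgen {R : realType} {n : nat} (base : set 'rV[R]_n)
    (post : set 'rV[R]_n -> set 'rV[R]_n)
    (K : forall j, set (wedge_space R n j)) (m : nat) : nat -> set 'rV[R]_n :=
  match m with
  | 0 => fun _ => set0
  | m'.+1 => fun i =>
      if i == m'.+1 then
        (if m' == 0%N then base
         else post (Tstep (Tgen base post K m') K m'.+1))
      else Tgen base post K m' i
  end.

Definition Tset {R : realType} {n : nat} (K1 : set 'rV[R]_n)
    (K : forall j, set (wedge_space R n j)) (j : nat) : set 'rV[R]_n :=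
  Tgen (K1 `|` negset K1) closure K j j.

Definition Ttilde {R : realType} {n : nat} (K1 : set 'rV[R]_n)
    (K : forall j, set (wedge_space R n j)) (j : nat) : set 'rV[R]_n :=
  Tgen (interior K1 `|` negset (interior K1)) id K j j.

From HB Require Import structures.
From mathcomp Require Import all_boot all_order all_algebra.
From mathcomp Require Import all_classical all_reals all_analysis.
From mathcomp Require Import perm.
Import Order.TTheory GRing.Theory Num.Theory.
Import numFieldNormedType.Exports.
Local Open Scope classical_set_scope.
Local Open Scope ring_scope.

(* The wedge x_1 ∧ ... ∧ x_j is a polynomial, hence continuous, function of
   x_1.  So if x_1 is witnessed by x_2, ..., x_j with x_1 ∧ ... ∧ x_j in the
   open set int(K_j) ∪ int(-K_j), every y_1 near x_1 is witnessed by the same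
   x_2, ..., x_j: the witnessed set is open.  Since int(K_1) ⊆ K_1, an
   induction shows T~(K_1,...,K_i) ⊆ T(K_1,...,K_i) for all i, so the
   witnesses for T~ are also witnesses for T, and T~(K_1,...,K_j) lies in the
   interior of the set whose closure is T(K_1,...,K_j). *)

Section Continuity.
Variable R : realType.

Lemma continuous_mx (Y : topologicalType) p q (f : Y -> 'M[R]_(p, q)) :
  (forall i j, continuous (fun y => f y i j)) -> continuous f.
Proof.
move=> fC x A /nbhs_ballP [e e0 eA].
have : \forall y \near x, forall i j, ball (f x i j) e (f y i j).
  apply: filter_forall => i; apply: filter_forall => j.
  exact: fC (nbhsx_ballx _ _ e0).
by apply: filterS => y fxy; apply: eA.
Qed.

Lemma continuous_det m : continuous (fun A : 'M[R]_m => \det A).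
Proof.
have termC (s : 'S_m) :
    continuous (fun A : 'M[R]_m => (-1) ^+ s * \prod_i A i (s i)).
  have prodC : continuous (fun A : 'M[R]_m => \prod_i A i (s i)).
    exact: (continuous_big mul_continuous
      (fun i _ => @coord_continuous R m m i (s i))).
  by move=> A; apply: continuousM (prodC A); exact: cst_continuous.
exact: (continuous_big add_continuous (fun s _ => termC s)).
Qed.

Lemma continuous_wedge (Y : topologicalType) n j (f : Y -> 'I_j -> 'rV[R]_n) :
  (forall i c, continuous (fun y => f y i 0 c)) ->
  continuous (fun y => wedge (f y)).
Proof.
move=> fC; apply: continuous_mx => ? k; rewrite /wedge.
under eq_fun do rewrite mxE.
have minorC : continuous (fun y => minor_on (f y) (enum_val k)).
  apply: continuous_mx => a b; rewrite /minor_on.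
  under eq_fun do rewrite mxE.
  by case: insub => [c|] /=; [exact: fC | exact: cst_continuous].
by move=> y; apply: continuous_comp (minorC y) (continuous_det _ _).
Qed.

End Continuity.

Section Witnesses.
Variables (R : realType) (n : nat) (K : forall j, set (wedge_space R n j)).

Lemma Tstep_sub_interior (P Q : nat -> set 'rV[R]_n) m :
  (forall i, (0 < i < m.+1)%N -> Q i `<=` P i) ->
  Tstep Q K m.+1 `<=` interior (Tstep P K m.+1).
Proof.
move=> QP x [v [v0 vQ vK]].
pose vy (y : 'rV[R]_n) (i : 'I_m.+1) := if val i == 0%N then y else v i.
have vxE : vy x = v by apply/funext => i; rewrite /vy; case: eqP => [/v0|].
set O := _ `|` _ in vK.
have Oopen : open O by apply: openU; exact: open_interior.
have wedgeC : continuous (fun y => wedge (vy y)).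
  apply: continuous_wedge => i c; rewrite /vy.
  case: eqP => _; [exact: coord_continuous | exact: cst_continuous].
have witnessed : (fun y => wedge (vy y)) @^-1` O `<=` Tstep P K m.+1.
  move=> y Oy; exists (vy y); split => // i; rewrite /vy.
  - by move->.
  - by move=> i0; rewrite gtn_eqF //; apply: QP (vQ i i0); rewrite i0 /=.
apply: (interiorS witnessed); rewrite /interior.
by apply: wedgeC; rewrite vxE; exact: open_nbhs_nbhs.
Qed.

Lemma Tgen_stable base post m i :
  (i <= m)%N -> Tgen base post K m i = Tgen base post K i i.
Proof.
elim: m => [|m IH]; first by rewrite leqn0 => /eqP ->.
rewrite leq_eqVlt => /predU1P [-> //|ltim].
by rewrite /= ltn_eqF // IH.
Qed.

Lemma TgenSS base post m :
  Tgen base post K m.+2 m.+2 = post (Tstep (Tgen base post K m.+1) K m.+2).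
Proof. by rewrite /= eqxx. Qed.

Lemma Ttilde_sub_Tset (K1 : set 'rV[R]_n) j :
  Ttilde K1 K j `<=` Tset K1 K j.
Proof.
elim/ltn_ind: j => -[|[|m]] IH //.
  by apply: setUSS; [|apply: image_subset]; exact: interior_subset.
rewrite /Ttilde /Tset !TgenSS => x /Tstep_sub_interior Tx.
apply: subset_closure; apply: interior_subset; apply: Tx => i /andP [_ im].
by rewrite !Tgen_stable //; exact: IH.
Qed.

End Witnesses.

Theorem theorem7 (R : realType) (n : nat) (K1 : set 'rV[R]_n)
    (K : forall j : nat, set (wedge_space R n j)) :
  proper_cone K1 ->
  (forall j : nat, (2 <= j <= n)%N -> proper_cone (K j)) ->
  forall j : nat, (2 <= j <= n)%N ->
    Ttilde K1 K j `<=` interior (Tset K1 K j).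
Proof.
move=> _ _ [|[|m]] // _.
rewrite /Ttilde /Tset !TgenSS.
apply: subset_trans (interiorS (@subset_closure _ _)).
apply: Tstep_sub_interior => i /andP [_ im].
by rewrite !Tgen_stable //; exact: Ttilde_sub_Tset.
Qed.
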